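(* Let $f\in A[X]$ be monic with discriminant $\Delta=\mathrm{Res}_X(f,f')\neq 0$, $r=v(\Delta)$, and let $N>2r$ be an integer. Let $f_N\in (A/\pi^NA)[X]$ be the reduction of $f$ modulo $\pi^N$ and $S_N\subseteq A/\pi^NA$ its set of roots. Then the number of roots of $f$ in $K$ is at least $|S_N/\approx|$.
   Context: $K$ is a field complete with respect to a non-archimedean discrete valuation $v$, normalized by $v(\pi)=1$ for a uniformizer $\pi$ of the valuation ring $A=\{x\in K: v(x)\geq 0\}$; the residue field $A/\pi A$ is finite. The equivalence relation $\approx$ on $S_N$ is: $x\approx y$ iff either $N\leq r$ and $x=y$, or $N>r$ and $x\equiv y \pmod{\overline{\pi}^{\,r+1}}$, where $\overline{\pi}$ is the image of $\pi$ in $A/\pi^NA$. *)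

From mathcomp Require Import all_boot all_order all_algebra.
Set Implicit Arguments. Unset Strict Implicit. Unset Printing Implicit Defensive.
Import Order.TTheory GRing.Theory Num.Theory.
Local Open Scope ring_scope.

Section DVR.
Variables (K : fieldType) (v : K -> int) (pi : K).

(* v is a (non-archimedean, Z-valued, i.e. discrete) valuation on K^*;
   v 0 = +oo is handled by treating 0 separately everywhere. *)
Definition is_discrete_valuation : Prop :=
  (forall x y : K, x != 0 -> y != 0 -> v (x * y) = v x + v y) /\
  (forall x y : K, x != 0 -> y != 0 -> x + y != 0 ->
     Order.min (v x) (v y) <= v (x + y)).

Definition inA (x : K) : bool := (x == 0) || (0 <= v x).

Definition in_piA (n : nat) (x : K) : Prop :=
  exists c : K, inA c /\ x = pi ^+ n * c.

Definition congr_pi (n : nat) (x y : K) : Prop := in_piA n (x - y).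

Definition vclose (n : nat) (x y : K) : bool :=
  (x - y == 0) || (n%:Z <= v (x - y)).

Definition v_complete : Prop :=
  forall u : nat -> K,
    (forall n : nat, exists m0 : nat, forall m p : nat,
        (m0 <= m)%N -> (m0 <= p)%N -> vclose n (u m) (u p)) ->
    exists l : K, forall n : nat, exists m0 : nat, forall m : nat,
        (m0 <= m)%N -> vclose n (u m) l.

Definition finite_residue_field : Prop :=
  exists s : seq K, all inA s /\
    forall a : K, inA a -> exists2 b, b \in s & congr_pi 1 a b.

(* The relation x ~ y on S_N, stated on lifts a, b in A of x, y in A/pi^N A:
   - if N <= r : x = y in A/pi^N A;
   - if N > r  : x = y mod (image of pi)^(r+1) in A/pi^N A, i.e.
                 a - b in pi^(r+1) A + pi^N A. *)
Definition approx (N r : nat) (a b : K) : Prop :=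
  if (N <= r)%N then congr_pi N a b
  else exists c : K, inA c /\ congr_pi N (a - b) (pi ^+ r.+1 * c).

End DVR.

(* Writing the discriminant as Res(f, f') = u f + w f' with u, w in A[X]
   shows that v(f'(x)) <= r at every x in A with v(f(x)) > r.  As N > 2r,
   Newton's iteration started at a lift a of a root of f_N therefore converges
   (Hensel's lemma) to a root l of f with v(l - a) >= N - r > r.  Two
   approximate roots that are not equivalent cannot yield the same root, since
   both would then be congruent to it modulo pi^(r+1). *)

From HB Require Import structures.
From mathcomp Require Import all_boot all_order all_algebra zify ring.
Set Implicit Arguments. Unset Strict Implicit. Unset Printing Implicit Defensive.
Import Order.TTheory GRing.Theory Num.Theory.
Local Open Scope ring_scope.

Lemma resultant_polyC (R : comNzRingType) (p : {poly R}) (c : R) :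
  resultant p c%:P = c ^+ (size p).-1.
Proof.
have dc0 : (size c%:P).-1 = 0%N by rewrite size_polyC; case: (c != 0).
have no_row (j : 'I_(size c%:P).-1) : False by have := leq_trans (ltn_ord j) (eq_leq dc0).
rewrite /resultant det_trig.
  rewrite (eq_bigr (fun _ => c)) ?prodr_const ?card_ord ?dc0 // => i _.
  rewrite Sylvester_mxE; case: splitP => [j|j ->]; first by case: no_row.
  by rewrite dc0 add0n leqnn subnn coefC mulr1n.
apply/is_trig_mxP => i j lt_ij; rewrite Sylvester_mxE.
case: splitP => [l|l def_i]; first by case: no_row.
by rewrite coefC subn_eq0 leqNgt -(addn0 l) -dc0 addnC -def_i lt_ij mul0rn.
Qed.

(* [map_resultant] of the library only covers morphisms out of a polynomial ring. *)
Lemma rmorph_resultant (aR rR : nzRingType) (f : {rmorphism aR -> rR})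
    (p q : {poly aR}) :
    f (lead_coef p) != 0 -> f (lead_coef q) != 0 ->
  f (resultant p q) = resultant (map_poly f p) (map_poly f q).
Proof.
move=> nz_fp nz_fq; rewrite /resultant /Sylvester_mx !size_map_poly_id0 //.
rewrite -det_map_mx /= map_col_mx; congr (\det (col_mx _ _));
  by apply: map_lin1_mx => w; rewrite map_poly_rV rmorphM /= map_rVpoly.
Qed.

Lemma monic_size_le1 (R : nzSemiRingType) (p : {poly R}) :
  p \is monic -> (size p <= 1)%N -> p = 1.
Proof.
move=> mon_p p_le1; have sz_p : size p = 1%N.
  by apply/anti_leq; rewrite p_le1 lt0n size_poly_eq0 monic_neq0.
by have := monicP mon_p; rewrite /lead_coef sz_p => lc_p; rewrite [p]size1_polyC ?sz_p // lc_p.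
Qed.

Lemma taylor2_polyOver (R : comNzRingType) (S : subringClosed R) (p : {poly R}) (x h : R) :
    p \is a polyOver S -> x \in S -> h \in S ->
  exists2 e, e \in S & p.[x + h] = p.[x] + p^`().[x] * h + h ^+ 2 * e.
Proof.
move=> pS xS hS; pose q := p \Po ('X + x%:P).
have qS : q \is a polyOver S by apply: polyOver_comp => //; rewrite polyOverXaddC.
exists (drop_poly 2 q).[h].
  by apply: rpred_horner => //; apply/polyOverP => i; rewrite coef_drop_poly (polyOverP qS).
have -> : p.[x + h] = q.[h] by rewrite horner_comp !hornerE addrC.
rewrite -{1}(poly_take_drop 2 q) hornerD hornerM hornerXn mulrC.
rewrite (horner_coef_wide _ (size_take_poly _ _)) !big_ord_recr big_ord0 /= add0r.
rewrite !coef_take_poly /= expr0 mulr1 expr1; congr (_ + _ * _ + _).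
  by rewrite -horner_coef0 horner_comp !hornerE.
have := coef_deriv q 0; rewrite mulr1n => <-.
by rewrite -horner_coef0 deriv_comp derivD derivX derivC addr0 mulr1 horner_comp !hornerE.
Qed.

Section Subring.
Variables (R : comNzRingType) (S : subringClosed R) (A : subComNzRingType (fun x => x \in S)).

Lemma polyOver_lift (p : {poly R}) :
  p \is a polyOver S -> {pA : {poly A} | map_poly val pA = p}.
Proof.
move=> pS; exists (\poly_(i < size p) insubd (0 : A) p`_i).
apply/polyP => i; rewrite coef_map_id0 ?raddf0 // coef_poly.
case: ltnP => [_|le_p_i]; first by rewrite insubdK //; exact: (polyOverP pS).
by rewrite nth_default // raddf0.
Qed.

Lemma resultant_in_subring_ideal (p q : {poly R}) :
    p \is a polyOver S -> q \is a polyOver S -> (1 < size p)%N -> (1 < size q)%N ->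
  exists u w : {poly R}, [/\ u \is a polyOver S, w \is a polyOver S &
    (resultant p q)%:P = u * p + w * q].
Proof.
move=> /polyOver_lift[pA <-] /polyOver_lift[qA <-].
have size_val := size_map_inj_poly val_inj (raddf0 (val : A -> R)).
rewrite !size_val => p_gt1 q_gt1.
have [[u w] /= _ def_res] := resultant_in_ideal p_gt1 q_gt1.
have valOver (s : {poly A}) : map_poly val s \is a polyOver S.
  by apply/polyOverP => i; rewrite coef_map_id0 ?raddf0 //; exact: valP.
have nz_lead (s : {poly A}) : (1 < size s)%N -> val (lead_coef s) != 0.
  rewrite -(raddf0 (val : A -> R)) (inj_eq val_inj) lead_coef_eq0 -size_poly_eq0.
  by case: (size s).
exists (map_poly val u), (map_poly val w); split => //.
have := congr1 (map_poly val) def_res; rewrite map_polyC rmorphD !rmorphM => <-.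
by rewrite -rmorph_resultant ?nz_lead.
Qed.

Lemma discriminant_in_subring_ideal (p : {poly R}) :
    p \is a polyOver S -> (1 < size p)%N ->
  exists u w : {poly R}, [/\ u \is a polyOver S, w \is a polyOver S &
    (resultant p p^`())%:P = u * p + w * p^`()].
Proof.
move=> pS p_gt1; have p'S := polyOver_deriv pS.
have [p'_gt1|] := ltnP 1 (size p^`()); first exact: resultant_in_subring_ideal.
move/size1_polyC => def_p'; set c := _`_0 in def_p'.
have cS : c \in S by apply: (polyOverP p'S).
exists 0, (c ^+ (size p).-2)%:P; split; rewrite ?rpred0 ?polyOverC ?rpredX //.
rewrite mul0r add0r def_p' resultant_polyC -polyCM -exprSr.
by case: (size p) p_gt1 => [|[|n]].
Qed.

End Subring.

Section Valuation.
Variables (K : fieldType) (v : K -> int).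
Hypothesis v_valuation : is_discrete_valuation v.

Definition vge (n : int) (x : K) : bool := (x == 0) || (n <= v x).

Lemma vM x y : x != 0 -> y != 0 -> v (x * y) = v x + v y.
Proof. by case: v_valuation => vM _; apply: vM. Qed.

Lemma v1 : v 1 = 0.
Proof. by apply: (addrI (v 1)); rewrite -vM ?oner_neq0 // mulr1 addr0. Qed.

Lemma vN x : v (- x) = v x.
Proof.
have N1_neq0 : (-1 : K) != 0 by rewrite oppr_eq0 oner_eq0.
have vN1 : v (-1) = 0 by have := vM N1_neq0 N1_neq0; rewrite mulrNN mulr1 v1; lia.
have [->|x_neq0] := eqVneq x 0; first by rewrite oppr0.
by rewrite -mulN1r vM // vN1 add0r.
Qed.

Lemma vX x n : x != 0 -> v (x ^+ n) = n%:Z * v x.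
Proof.
move=> x_neq0; elim: n => [|n IHn]; first by rewrite expr0 v1 mul0r.
by rewrite exprS vM ?expf_neq0 // IHn -[n.+1]addn1 PoszD mulrDl mul1r addrC.
Qed.

Lemma vV x : x != 0 -> v x^-1 = - v x.
Proof. by move=> x_neq0; have := vM x_neq0 (invr_neq0 x_neq0); rewrite mulfV // v1; lia. Qed.

Lemma vge_le m n x : m <= n -> vge n x -> vge m x.
Proof. by move=> le_mn /orP[x0|le_nv]; rewrite /vge ?x0 // (le_trans le_mn le_nv) orbT. Qed.

Lemma vge0 n : vge n 0. Proof. by rewrite /vge eqxx. Qed.

Lemma vgeN n x : vge n (- x) = vge n x.
Proof. by rewrite /vge oppr_eq0 vN. Qed.

Lemma vgeD n x y : vge n x -> vge n y -> vge n (x + y).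
Proof.
rewrite /vge; have [->|x_neq0] := eqVneq x 0; first by rewrite add0r.
have [->|y_neq0] := eqVneq y 0; first by rewrite addr0 (negbTE x_neq0).
move=> /= le_nx le_ny; have [->//|xy_neq0] := eqVneq (x + y) 0.
have [_ /(_ x y x_neq0 y_neq0 xy_neq0) le_min_vxy] := v_valuation.
by apply: le_trans le_min_vxy; rewrite le_min le_nx le_ny.
Qed.

Lemma vgeB n x y : vge n x -> vge n y -> vge n (x - y).
Proof. by move=> vx vy; rewrite vgeD ?vgeN. Qed.

Lemma vgeM m n x y : vge m x -> vge n y -> vge (m + n) (x * y).
Proof.
rewrite /vge; have [->|x_neq0] := eqVneq x 0; first by rewrite mul0r eqxx.
have [->|y_neq0] := eqVneq y 0; first by rewrite mulr0 eqxx.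
by rewrite /= mulf_eq0 (negbTE x_neq0) (negbTE y_neq0) vM // => /lerD; apply.
Qed.

Lemma vge_divr m x y : y != 0 -> vge m x -> vge (m - v y) (x / y).
Proof. by move=> y_neq0 /vgeM; apply; rewrite /vge vV // lexx orbT. Qed.

Lemma vge_eq0 x : (forall n : nat, vge n%:Z x) -> x = 0.
Proof.
by move=> vx; apply/eqP; move: (vx `|v x|.+1); rewrite /vge; case: eqP => //= _; lia.
Qed.

Definition vring : {pred K} := fun x => inA v x.

Lemma vringE x : (x \in vring) = vge 0 x. Proof. by []. Qed.

Lemma vring_subring_closed : subring_closed vring.
Proof.
split=> [|x y|x y]; rewrite !vringE; first by rewrite /vge v1 lexx orbT.
  exact: vgeB.
by move=> /vgeM vx /vx; rewrite addr0.
Qed.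

HB.instance Definition _ := GRing.isSubringClosed.Build K vring vring_subring_closed.

Definition vringT := {x : K | x \in vring}.
HB.instance Definition _ := [isSub of vringT for @sval _ _].
HB.instance Definition _ := [Choice of vringT by <:].
HB.instance Definition _ := [SubChoice_isSubComNzRing of vringT by <:].

Lemma vge_horner_shift (f : {poly K}) (n : int) x y :
    f \is a polyOver vring -> x \in vring -> 0 <= n ->
  vge n (y - x) -> vge n f.[x] -> vge n f.[y].
Proof.
move=> fA xA n_ge0 vyx vfx; have yxA : y - x \in vring by rewrite vringE (vge_le n_ge0).
have [e eA] := taylor2_polyOver fA xA yxA; rewrite addrC subrK => ->.
have f'xA : f^`().[x] \in vring by rewrite rpred_horner ?polyOver_deriv.
rewrite !vgeD //; first by rewrite -[n]add0r vgeM.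
by rewrite expr2 -mulrA -[n]addr0 vgeM // -[0]addr0 vgeM -?vringE.
Qed.

Lemma vderiv_le_disc (f : {poly K}) (r : nat) x :
    f \is a polyOver vring -> (1 < size f)%N ->
    resultant f f^`() != 0 -> v (resultant f f^`()) = r%:Z ->
  x \in vring -> vge (r%:Z + 1) f.[x] -> f^`().[x] != 0 /\ v f^`().[x] <= r%:Z.
Proof.
move=> fA f_gt1 disc_neq0 v_disc xA vfx.
have [u [w [uA wA /(congr1 (horner^~ x))]]] := discriminant_in_subring_ideal vringT fA f_gt1.
rewrite /= hornerC hornerD !hornerM => def_disc.
suff : ~~ vge (r%:Z + 1) f^`().[x].
  by rewrite /vge negb_or -ltNge => /andP[f'x_neq0 lt_vf'x]; split; last lia.
apply: contra disc_neq0 => vf'x; suff: vge (r%:Z + 1) (resultant f f^`()).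
  by rewrite /vge v_disc; case: eqP => //= _; lia.
by rewrite def_disc vgeD // -[_ + 1]add0r vgeM // -vringE rpred_horner.
Qed.

Section Newton.
Variables (f : {poly K}) (r N : nat).
Hypotheses (fA : f \is a polyOver vring) (f_gt1 : (1 < size f)%N)
  (disc_neq0 : resultant f f^`() != 0) (v_disc : v (resultant f f^`()) = r%:Z)
  (two_r_lt_N : (2 * r < N)%N).

Definition newton x := x - f.[x] / f^`().[x].

Lemma newton_step x (n : nat) : x \in vring -> vge (N + n)%:Z f.[x] ->
  [/\ newton x \in vring, vge (N + n.+1)%:Z f.[newton x]
     & vge ((N + n)%:Z - r%:Z) (newton x - x)].
Proof.
move=> xA vfx; have /(vderiv_le_disc fA f_gt1 disc_neq0 v_disc xA)[f'x_neq0 vf'x] :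
    vge (r%:Z + 1) f.[x] by apply: vge_le vfx; lia.
set h := newton x - x; have def_h : h = - (f.[x] / f^`().[x]) by rewrite /h addrAC subrr add0r.
have vh : vge ((N + n)%:Z - v f^`().[x]) h by rewrite def_h vgeN vge_divr.
have vh_r : vge ((N + n)%:Z - r%:Z) h by apply: vge_le vh; lia.
have hA : h \in vring by rewrite vringE; apply: vge_le vh_r; lia.
have newtonA : newton x \in vring by rewrite -(subrK x (newton x)) rpredD.
split => //; have [e eA] := taylor2_polyOver fA xA hA; rewrite addrC subrK => ->.
have -> : f^`().[x] * h = - f.[x] by rewrite def_h mulrN mulrC divfK.
rewrite addrN add0r expr2; move: eA; rewrite vringE => /(vgeM (vgeM vh vh)).
by apply: vge_le; lia.
Qed.

Variable a0 : K.
Hypotheses (a0A : a0 \in vring) (vfa0 : vge N%:Z f.[a0]).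

Local Notation a n := (iter n newton a0).

Lemma newton_iter_approx n : a n \in vring /\ vge (N + n)%:Z f.[a n].
Proof.
elim: n => [|n [anA vfan]]; first by rewrite addn0.
by have [] := newton_step anA vfan.
Qed.

Lemma newton_iter_cauchy n d : vge ((N + n)%:Z - r%:Z) (a (n + d) - a n).
Proof.
elim: d => [|d IHd]; first by rewrite addn0 subrr vge0.
have [anA vfan] := newton_iter_approx (n + d); have [_ _ vstep] := newton_step anA vfan.
rewrite addnS iterS -(subrK (a (n + d)) (newton _)) -addrA vgeD //.
by apply: vge_le vstep; lia.
Qed.

Lemma hensel_lift : v_complete v -> exists2 l, root f l & vge (N%:Z - r%:Z) (l - a0).
Proof.
move=> v_compl; have [l near_l] : exists l, forall n : nat, exists m0 : nat,
    forall m, (m0 <= m)%N -> vge n%:Z (a m - l).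
  apply: v_compl => n; exists n => m p le_nm le_np; rewrite /vclose -/(vge _ _).
  have -> : a m - a p = (a (n + (m - n)) - a n) - (a (n + (p - n)) - a n).
    by rewrite !subnKC // opprB addrA subrK.
  by apply: vge_le (vgeB (newton_iter_cauchy _ _) (newton_iter_cauchy _ _)); lia.
exists l.
  apply/eqP/vge_eq0 => n; have [m0 near_lm] := near_l n.
  have [amA vfam] := newton_iter_approx (m0 + n).
  apply: vge_horner_shift fA amA _ _ _ => //; first by rewrite -opprB vgeN near_lm ?leq_addr.
  by apply: vge_le vfam; lia.
have [m0 near_lm] := near_l (N - r)%N.
have -> : l - a0 = (a (0 + m0) - a 0) - (a m0 - l) by rewrite add0n /=; ring.
rewrite vgeB ?(vge_le _ (newton_iter_cauchy 0 m0)) //; first lia.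
by rewrite (vge_le _ (near_lm _ (leqnn _))) //; lia.
Qed.

End Newton.

Section Uniformizer.
Variable pi : K.
Hypotheses (pi_neq0 : pi != 0) (v_pi : v pi = 1).

Lemma vge_pi_expr n : vge n%:Z (pi ^+ n).
Proof. by rewrite /vge vX // v_pi mulr1 lexx orbT. Qed.

Lemma in_piA_vge n x : in_piA v pi n x -> vge n%:Z x.
Proof. by case=> c [cA ->]; rewrite -[n%:Z]addr0 vgeM ?vge_pi_expr. Qed.

Lemma vge_approx (N r : nat) x y : (r < N)%N -> vge r.+1%:Z (x - y) -> approx v pi N r x y.
Proof.
move=> lt_rN vxy; rewrite /approx leqNgt lt_rN.
have pir_neq0 : pi ^+ r.+1 != 0 by rewrite expf_neq0.
exists ((x - y) / pi ^+ r.+1); split.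
  by have := vge_divr pir_neq0 vxy; rewrite vX // v_pi mulr1 subrr.
by exists 0; rewrite mulrC divfK // subrr mulr0 /inA eqxx.
Qed.

End Uniformizer.

End Valuation.

Theorem lemma3p8 (K : fieldType) (v : K -> int) (pi : K)
  (Hv : is_discrete_valuation v) (Hpi0 : pi != 0) (Hpi : v pi = 1)
  (Hcomplete : v_complete v) (Hres : finite_residue_field v pi)
  (f : {poly K}) (HfA : forall i : nat, inA v f`_i) (Hmonic : f \is monic)
  (HD : resultant f f^`() != 0)
  (r : nat) (Hr : v (resultant f f^`()) = r%:Z)
  (N : nat) (HN : (2 * r < N)%N)
  (k : nat) (a : 'I_k -> K)
  (HaA : forall i, inA v (a i))
  (Hroot : forall i, in_piA v pi N f.[a i])
  (Hdist : forall i j, i != j -> ~ approx v pi N r (a i) (a j)) :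
  exists s : seq K, [/\ uniq s, all (root f) s & (k <= size s)%N].
Proof.
have fA : f \is a polyOver (vring v) by apply/polyOverP.
have vfa i : vge v N%:Z f.[a i] := in_piA_vge Hv Hpi0 Hpi (Hroot i).
have [f_gt1|f_le1] := ltnP 1 (size f); last first.
  case: k a vfa {HaA Hroot Hdist} => [|k] a vfa; first by exists [::].
  have := vfa ord0; rewrite (monic_size_le1 Hmonic f_le1) hornerC /vge oner_eq0 (v1 Hv).
  by move: HN; lia.
have lift i : exists l, root f l && vge v r.+1%:Z (l - a i).
  have [l fl vla] := hensel_lift Hv fA f_gt1 HD Hr HN (HaA i) (vfa i) Hcomplete.
  by exists l; rewrite fl (vge_le _ vla) //; lia.
pose l i := xchoose (lift i).
have root_l i : root f (l i) by have /andP[] := xchooseP (lift i).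
have vla i : vge v r.+1%:Z (l i - a i) by have /andP[] := xchooseP (lift i).
exists [seq l i | i <- enum 'I_k]; split; last by rewrite size_map size_enum_ord.
  rewrite map_inj_uniq ?enum_uniq // => i j eq_l; apply/eqP; have [//|/Hdist[]] := eqVneq i j.
  apply: vge_approx => //; first lia.
  have -> : a i - a j = (l j - a j) - (l i - a i) by rewrite eq_l; ring.
  exact: vgeB.
by apply/allP => _ /mapP[i _ ->].
Qed.
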